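(* Let $p$ and $p'$ be consecutive patterns of the same length $r$ that are non-overlapping, mutually non-overlapping, and interchangeable. Then for all $n$ and all $S,T\subseteq[n]$, $$|\{e\in\mathbf{I}_n:\mathrm{Em}(p,e)=S,\ \mathrm{Em}(p',e)=T\}|=|\{e\in\mathbf{I}_n:\mathrm{Em}(p,e)=T,\ \mathrm{Em}(p',e)=S\}|.$$ In particular, $p$ and $p'$ are super-strongly Wilf equivalent.
   Context: An inversion sequence of length $n$ is an integer sequence $e=e_1e_2\dots e_n$ with $0\le e_i<i$ for all $i$; $\mathbf{I}_n$ denotes the set of these. A pattern of length $r$ is a sequence $p=p_1\dots p_r$ with $p_i\in\{0,\dots,r-1\}$ such that whenever a value $j>0$ appears in $p$, the value $j-1$ also appears. The reduction of an integer word $w$ is obtained by replacing every occurrence of the $i$-th smallest distinct value of $w$ by $i-1$. An inversion sequence $e$ has an occurrence of the consecutive pattern $p$ in position $i$ if the reduction of $e_i\dots e_{i+r-1}$ equals $p$; $\mathrm{Em}(p,e)$ is the set of such positions. $p=p_1\dots p_r$ is non-overlapping if for every $1<i<r$ the reductions of $p_1\dots p_i$ and $p_{r-i+1}\dots p_r$ differ. $p,p'$ (both of length $r$) are mutually non-overlapping if for every $1<i<r$ the reductions of $p_1\dots p_i$ and $p'_{r-i+1}\dots p'_r$ differ, and the reductions of $p'_1\dots p'_i$ and $p_{r-i+1}\dots p_r$ differ. Given patterns $p,p'$ of length $r$ with $p_1=p'_1$, $p_r=p'_r$ and $\max_i p_i=\max_i p'_i$, $p$ is changeable for $p'$ if for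 all $1\le i\le r$, $p'_i\le\max(\{p_j:1\le j\le i\}\cup\{p_j-j+i: i<j\le r\})$; $p$ and $p'$ are interchangeable if each is changeable for the other. Two patterns are super-strongly Wilf equivalent if $|\{e\in\mathbf{I}_n:\mathrm{Em}(p,e)=T\}|=|\{e\in\mathbf{I}_n:\mathrm{Em}(p',e)=T\}|$ for all $n$ and all $T\subseteq[n]$. *)

From mathcomp Require Import all_boot.
Set Implicit Arguments. Unset Strict Implicit. Unset Printing Implicit Defensive.

(* Sequences are 0-indexed: entry k (0-based) of a seq is entry k+1 of the paper. *)

(* Inversion sequences of length n: e_(k+1) < k+1, i.e. e_k <= k (0-based). *)
Definition invseq (n : nat) : {set n.-tuple 'I_n} :=
  [set e : n.-tuple 'I_n | [forall i : 'I_n, (tnth e i : nat) <= i]].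

(* reduction: the i-th smallest distinct value (i = 1,2,..) becomes i-1 *)
Definition reduce (w : seq nat) : seq nat :=
  [seq index x (sort leq (undup w)) | x <- w].

Definition is_pattern (p : seq nat) : bool :=
  all (fun x => x < size p) p &&
  all (fun j => (0 < j) ==> (j.-1 \in p)) p.

(* occurrence of p in w starting at 0-based position i (paper position i+1) *)
Definition occurs_at (p w : seq nat) (i : nat) : bool :=
  (i + size p <= size w) && (reduce (take (size p) (drop i w)) == p).

(* Em(p,e), as a set of 0-based positions (position i <-> paper position i+1) *)
Definition Em (p : seq nat) (n : nat) (e : n.-tuple 'I_n) : {set 'I_n} :=
  [set i : 'I_n | occurs_at p [seq val x | x <- e] i].

(* reduction of p_1..p_i is take i p; reduction of p_{r-i+1}..p_r is drop (r-i) p *)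
Definition non_overlapping (p : seq nat) : bool :=
  [forall i : 'I_(size p), (1 < i) ==>
     (reduce (take i p) != reduce (drop (size p - i) p))].

Definition mutually_non_overlapping (p p' : seq nat) : bool :=
  (size p == size p') &&
  [forall i : 'I_(size p), (1 < i) ==>
     ((reduce (take i p) != reduce (drop (size p' - i) p')) &&
      (reduce (take i p') != reduce (drop (size p - i) p)))].

Definition maxs (s : seq nat) : nat := \max_(x <- s) x.

(* p is changeable for p' ; 0-based index k corresponds to paper index i = k+1.
   The term p_j - j + i (j > i) is computed with truncated subtraction, which
   does not change the max since the first part of the set contains p_1 >= 0. *)
Definition changeable (p p' : seq nat) : bool :=
  let r := size p in
  [&& size p' == r,
      head 0 p == head 0 p',
      last 0 p == last 0 p',
      maxs p == maxs p' &
      [forall k : 'I_r,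
         nth 0 p' k <= maxn (\max_(j < r | j <= k) nth 0 p j)
                            (\max_(j < r | k < j) (nth 0 p j - (j - k)))]].

Definition interchangeable (p p' : seq nat) : bool :=
  changeable p p' && changeable p' p.

Definition super_strongly_Wilf_equiv (p p' : seq nat) : Prop :=
  forall (n : nat) (T : {set 'I_n}),
    #|[set e in invseq n | Em p e == T]| = #|[set e in invseq n | Em p' e == T]|.

From mathcomp Require Import all_boot zify.

(* For distinct patterns [p], [p'] satisfying the hypotheses we build an
   involution [swap_word] on words of naturals: every occurrence of [p] is
   rewritten as an occurrence of [p'] on the same set of values, and vice
   versa, all other entries being left untouched.
   - Non-overlap (of [p], of [p'], and mutual) lets two occurrences share at
     most one position, so every position is interior to at most one
     occurrence; shared end positions are harmless because [p] and [p'] have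
     the same first and last letters.
   - Since the values of a rewritten window are unchanged, reduction shows
     that the occurrences of [p] and [p'] are exactly exchanged and that the
     swap is an involution.
   - Changeability of [p] for [p'] and of [p'] for [p] is exactly what keeps
     the inversion-sequence condition [e_i <= i - 1] valid after the swap.
   Restricted to inversion sequences of length [n], the swap is an involution
   exchanging [Em p] and [Em p']; counting through it gives both claims. *)

Set Implicit Arguments. Unset Strict Implicit. Unset Printing Implicit Defensive.

Definition dvals (u : seq nat) : seq nat := sort leq (undup u).

Lemma reduceE (u : seq nat) : reduce u = [seq index x (dvals u) | x <- u].
Proof. by []. Qed.

Lemma mem_dvals (u : seq nat) : dvals u =i u.
Proof. by move=> x; rewrite mem_sort mem_undup. Qed.

Lemma dvals_sorted (u : seq nat) : sorted ltn (dvals u).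
Proof.
rewrite ltn_sorted_uniq_leq sort_uniq undup_uniq /=.
exact: (sort_sorted leq_total).
Qed.

Lemma dvals_eq (u v : seq nat) : sorted ltn v -> u =i v -> dvals u = v.
Proof.
move=> sv uv; apply: (sorted_eq leq_trans anti_leq).
- exact: (sort_sorted leq_total).
- by apply: sub_sorted sv => x y /ltnW.
apply: uniq_perm; first by rewrite sort_uniq undup_uniq.
  exact: (sorted_uniq ltn_trans ltnn).
by move=> x; rewrite mem_dvals uv.
Qed.

Lemma index_map_in (f : nat -> nat) (s : seq nat) x :
  {in s &, injective f} -> x \in s -> index (f x) (map f s) = index x s.
Proof.
elim: s => [//|y s IH] inj /= xs.
have [->|yx] := eqVneq y x; first by rewrite eqxx.
have fyx : f y != f x.
  by apply: contra yx => /eqP /(inj _ _ (mem_head _ _) xs) ->.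
rewrite (negbTE fyx) IH //; last by move: xs; rewrite in_cons eq_sym (negbTE yx).
by move=> a b ha hb; apply: inj; rewrite in_cons ?ha ?hb orbT.
Qed.

Lemma reduce_map_mono (f : nat -> nat) (s : seq nat) :
  {in s &, forall x y, x < y -> f x < f y} -> reduce (map f s) = reduce s.
Proof.
move=> mono.
have inj : {in s &, injective f}.
  move=> x y hx hy fxy.
  by case: (ltngtP x y) => // [/(mono _ _ hx hy)|/(mono _ _ hy hx)]; rewrite fxy ltnn.
have dvals_map : dvals (map f s) = map f (dvals s).
  apply: dvals_eq.
    have all_s : all (mem s) (dvals s) by apply/allP => x; rewrite mem_dvals.
    exact: (homo_sorted_in mono all_s (dvals_sorted s)).
  by move=> x; apply/mapP/mapP => -[y ys ->]; exists y; rewrite ?mem_dvals in ys *.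
rewrite !reduceE dvals_map -map_comp; apply/eq_in_map => x xs /=.
rewrite index_map_in ?mem_dvals //.
by move=> a b; rewrite !mem_dvals; apply: inj.
Qed.

Lemma index_dvals_mono (u : seq nat) :
  {in u &, forall x y, x < y -> index x (dvals u) < index y (dvals u)}.
Proof.
move=> x y; rewrite -!(mem_dvals u) => xu yu xy.
rewrite ltnNge; apply: contraL xy.
by move/(sorted_leq_index leq_trans leqnn (sort_sorted leq_total _) _ _ yu xu); rewrite -leqNgt.
Qed.

Lemma reduce_take (u : seq nat) j : reduce (take j (reduce u)) = reduce (take j u).
Proof.
rewrite [reduce u]reduceE -map_take reduce_map_mono // => x y xu yu.
by apply: index_dvals_mono; apply: mem_take; [exact: xu | exact: yu].
Qed.

Lemma reduce_drop (u : seq nat) j : reduce (drop j (reduce u)) = reduce (drop j u).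
Proof.
rewrite [reduce u]reduceE -map_drop reduce_map_mono // => x y xu yu.
by apply: index_dvals_mono; apply: mem_drop; [exact: xu | exact: yu].
Qed.

Lemma dvals_map_nth (V Q : seq nat) : sorted ltn V -> Q =i iota 0 (size V) ->
  dvals (map (nth 0 V) Q) = V.
Proof.
move=> sV QV; apply: dvals_eq => // x; apply/mapP/idP.
  by case=> i; rewrite QV mem_iota => /= lt ->; exact: mem_nth.
move=> xV; exists (index x V); last by rewrite nth_index.
by rewrite QV mem_iota /= index_mem.
Qed.

Lemma reduce_map_nth (V Q : seq nat) : sorted ltn V -> Q =i iota 0 (size V) ->
  reduce (map (nth 0 V) Q) = Q.
Proof.
move=> sV QV; rewrite reduceE dvals_map_nth // -map_comp -[RHS]map_id.
apply/eq_in_map => i; rewrite QV mem_iota /= => ilt.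
by rewrite index_uniq // (sorted_uniq ltn_trans ltnn).
Qed.

Lemma sorted_ltn_gap (V : seq nat) i j : sorted ltn V -> i <= j -> j < size V ->
  nth 0 V i + (j - i) <= nth 0 V j.
Proof.
move=> /(sortedP 0) sV; elim: j => [|j IH] ij js; first by case: i ij => // _; rewrite addn0.
have [->|ne] := eqVneq i j.+1; first by rewrite subnn addn0.
have ij' : i <= j by rewrite -ltnS ltn_neqAle ne ij.
have := IH ij' (ltnW js); have := sV j js; lia.
Qed.

Lemma maxs_cons x s : maxs (x :: s) = maxn x (maxs s).
Proof. by rewrite /maxs big_cons. Qed.

Lemma leq_maxs (s : seq nat) x : x \in s -> x <= maxs s.
Proof. by move=> xs; rewrite /maxs (leq_bigmax_seq x xs). Qed.

Lemma maxs_mem (s : seq nat) : s != [::] -> maxs s \in s.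
Proof.
elim: s => [//|x [|y s] IH] _; first by rewrite maxs_cons /maxs big_nil maxn0 mem_head.
by rewrite maxs_cons in_cons; case: leqP => _; rewrite ?eqxx // IH ?orbT.
Qed.

Lemma pattern_down P i j : is_pattern P -> i \in P -> j <= i -> j \in P.
Proof.
case/andP=> _ /allP down; elim: i j => [|i IH] j iP; first by rewrite leqn0 => /eqP ->.
rewrite leq_eqVlt ltnS => /orP [/eqP -> // | ji].
by apply: IH ji; move/implyP: (down _ iP); apply.
Qed.

Lemma pattern_values P : is_pattern P -> P != [::] -> P =i iota 0 (maxs P).+1.
Proof.
move=> pP nP x; rewrite mem_iota /= add0n ltnS.
apply/idP/idP; first exact: leq_maxs.
exact: pattern_down pP (maxs_mem nP).
Qed.

Definition window (w : seq nat) (a k : nat) : seq nat := take k (drop a w).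

Lemma size_window w a k : a + k <= size w -> size (window w a k) = k.
Proof. by move=> akw; rewrite size_takel // size_drop; lia. Qed.

Lemma nth_window w a k i : i < k -> nth 0 (window w a k) i = nth 0 w (a + i).
Proof. by move=> ik; rewrite nth_take // nth_drop. Qed.

Section Occurrences.
Variables (P w : seq nat) (a : nat).
Hypothesis occ : occurs_at P w a.

Local Notation V := (dvals (window w a (size P))).

Lemma occ_size : a + size P <= size w.
Proof. by case/andP: occ. Qed.

Lemma occ_reduce : reduce (window w a (size P)) = P.
Proof. by case/andP: occ => _ /eqP. Qed.

Lemma occ_nth k : k < size P -> nth 0 w (a + k) = nth 0 V (nth 0 P k).
Proof.
move=> kP; have sz := size_window occ_size.
rewrite -{2}occ_reduce reduceE (nth_map 0) ?sz // nth_index; first by rewrite nth_window.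
by rewrite mem_dvals; apply: mem_nth; rewrite sz.
Qed.

Lemma occ_values : P =i iota 0 (size V).
Proof.
move=> x; rewrite -{1}occ_reduce reduceE mem_iota /= add0n; apply/mapP/idP.
  by case=> y yu ->; rewrite index_mem mem_dvals.
move=> xV; exists (nth 0 V x); first by rewrite -mem_dvals mem_nth.
by rewrite index_uniq // sort_uniq undup_uniq.
Qed.

End Occurrences.

Lemma occ_same P Q w a : size P = size Q ->
  occurs_at P w a -> occurs_at Q w a -> P = Q.
Proof. by move=> PQ oP oQ; rewrite -(occ_reduce oP) -(occ_reduce oQ) PQ. Qed.

Lemma occ_overlap P Q w a b r : size P = r -> size Q = r ->
  occurs_at P w a -> occurs_at Q w b -> a <= b <= a + r ->
  reduce (drop (b - a) P) = reduce (take (a + r - b) Q).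
Proof.
move=> sP sQ oP oQ /andP [ab bar].
have zP := occ_size oP; have zQ := occ_size oQ; rewrite sP in zP; rewrite sQ in zQ.
rewrite -(occ_reduce oP) -(occ_reduce oQ) reduce_drop reduce_take sP sQ; congr reduce.
apply: (@eq_from_nth _ 0) => [|i]; first by rewrite size_drop size_takel ?size_window //; lia.
rewrite size_drop size_window // => ir.
have i1 : b - a + i < r by lia.
have i2 : i < a + r - b by lia.
by rewrite nth_drop nth_take // !nth_window ?addnA ?subnKC //; lia.
Qed.

Definition inversion_word (w : seq nat) : Prop :=
  forall q, q < size w -> nth 0 w q <= q.

Lemma le_bigmax_witness n (C : pred 'I_n) (F : 'I_n -> nat) x :
  0 < x -> x <= \max_(j | C j) F j -> exists2 j, C j & x <= F j.
Proof.
move=> x0 xmax; have /existsP [j /andP [Cj xj]] : [exists j, C j && (x <= F j)].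
  apply: contraLR xmax; rewrite negb_exists -ltnNge => /forallP small.
  have : \max_(j | C j) F j <= x.-1.
    apply/bigmax_leqP => j Cj; rewrite -ltnS prednK //.
    by move: (small j); rewrite Cj /= -ltnNge.
  by move/leq_ltn_trans; apply; rewrite prednK.
by exists j.
Qed.

Section Changeable.
Variables P Q : seq nat.
Hypothesis ch : changeable P Q.

Lemma changeable_size : size Q = size P.
Proof. by case/and5P: ch => /eqP. Qed.

Lemma changeable_maxs : maxs Q = maxs P.
Proof. by case/and5P: ch => _ _ _ /eqP. Qed.

Lemma changeable_ends k : (k == 0) || (k == (size P).-1) -> nth 0 Q k = nth 0 P k.
Proof.
case/and5P: ch => /eqP sQ /eqP hd /eqP lst _ _.
case/orP => /eqP ->; first by rewrite !nth0 hd.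
by rewrite -{1}sQ !nth_last lst.
Qed.

Lemma changeable_witness k : k < size P -> 0 < nth 0 Q k ->
  exists2 j, j < size P & nth 0 Q k + (j - k) <= nth 0 P j.
Proof.
move=> kP Qk0; case/and5P: ch => _ _ _ _ /forallP /(_ (Ordinal kP)) /=.
rewrite leq_max => /orP [] /(le_bigmax_witness Qk0) [j /= jk Qkj].
  by exists (nat_of_ord j) => //; lia.
by exists (nat_of_ord j) => //; lia.
Qed.

Lemma changeable_values : is_pattern P -> is_pattern Q -> Q =i P.
Proof.
have [P0 _ _|nP pP pQ x] := eqVneq P [::].
  by have := changeable_size; rewrite P0 => /size0nil ->.
have nQ : Q != [::] by rewrite -size_eq0 changeable_size size_eq0.
by rewrite (pattern_values pP nP) (pattern_values pQ nQ) changeable_maxs.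
Qed.

(* The key inequality: if [P] occurs at [a] in a word satisfying the
   inversion condition, then writing [Q] on the same values in the same
   window still satisfies it. *)
Lemma changeable_bound w a k : occurs_at P w a -> inversion_word w -> k < size P ->
  nth 0 (dvals (window w a (size P))) (nth 0 Q k) <= a + k.
Proof.
move=> oc iw kP; set V := dvals _.
have sV : sorted ltn V by exact: dvals_sorted.
have Pvals (x : nat) : x \in P -> x < size V by rewrite (occ_values oc) mem_iota.
have wP j : j < size P -> nth 0 V (nth 0 P j) <= a + j.
  move=> jP; rewrite -(occ_nth oc) //; apply: iw; have := occ_size oc; lia.
have P0 : 0 < size P by case: (size P) kP.
have [Qk0|] := posnP (nth 0 Q k).
  have := sorted_ltn_gap (j := nth 0 P 0) sV (leq0n _) (Pvals _ (mem_nth 0 P0)).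
  by have := wP 0 P0; rewrite Qk0; lia.
move=> /(changeable_witness kP) [j jP Qkj].
have QkPj : nth 0 Q k <= nth 0 P j by apply: leq_trans Qkj; apply: leq_addr.
have := sorted_ltn_gap sV QkPj (Pvals _ (mem_nth 0 jP)).
by have := wP j jP; lia.
Qed.

End Changeable.

Record swappable (p p' : seq nat) : Prop := Swappable {
  pattern_l : is_pattern p;
  pattern_r : is_pattern p';
  non_overlapping_l : non_overlapping p;
  non_overlapping_r : non_overlapping p';
  mutually_non_overlapping_lr : mutually_non_overlapping p p';
  changeable_lr : changeable p p';
  changeable_rl : changeable p' p;
  distinct_lr : p != p' }.

Section SwapPair.
Variables p p' : seq nat.
Hypothesis sw : swappable p p'.

Local Notation r := (size p).

Definition in_pair (P : seq nat) : bool := (P == p) || (P == p').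

Definition partner (P : seq nat) : seq nat := if P == p then p' else p.

Lemma pair_distinct : (p' == p) = false.
Proof. by rewrite eq_sym (negbTE (distinct_lr sw)). Qed.

Lemma in_pairP P : in_pair P -> P = p \/ P = p'.
Proof. by case/orP => /eqP; [left | right]. Qed.

Lemma partner_in P : in_pair P -> in_pair (partner P).
Proof. by case/in_pairP => ->; rewrite /in_pair /partner ?eqxx ?pair_distinct ?eqxx ?orbT. Qed.

Lemma partnerK P : in_pair P -> partner (partner P) = P.
Proof. by case/in_pairP => ->; rewrite /partner ?eqxx ?pair_distinct ?eqxx. Qed.

Lemma pair_size P : in_pair P -> size P = r.
Proof. by case/in_pairP => ->; rewrite ?(changeable_size (changeable_lr sw)). Qed.

Lemma pair_changeable P : in_pair P -> changeable P (partner P).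
Proof.
by case/in_pairP => ->; rewrite /partner ?eqxx ?pair_distinct; case: sw.
Qed.

Lemma partner_values P : in_pair P -> partner P =i P.
Proof.
move=> inP; have [inQ chP] := (partner_in inP, pair_changeable inP).
by apply: changeable_values chP _ _; [case/in_pairP: inP | case/in_pairP: inQ] => ->; case: sw.
Qed.

Lemma pair_no_overlap P Q k : in_pair P -> in_pair Q -> 1 < k < r ->
  reduce (drop (r - k) P) != reduce (take k Q).
Proof.
move=> inP inQ /andP [k1 kr].
case: sw => _ _ nov_p nov_p' mnov ch _ _.
have sp' : size p' = r by rewrite (changeable_size ch).
have kr' : k < size p' by rewrite sp'.
have /implyP /(_ k1) n1 := forallP nov_p (Ordinal kr).
have /implyP /(_ k1) := forallP nov_p' (Ordinal kr'); rewrite /= sp' => n2.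
case/andP: mnov => _ /forallP /(_ (Ordinal kr)) /implyP /(_ k1) /andP [].
rewrite /= sp' => m1 m2.
by case/in_pairP: inP => ->; case/in_pairP: inQ => ->; rewrite eq_sym.
Qed.

Lemma occ_apart P Q w a b : in_pair P -> in_pair Q ->
  occurs_at P w a -> occurs_at Q w b -> a < b -> a + r <= b.+1.
Proof.
move=> inP inQ oP oQ ab; rewrite leqNgt; apply/negP => bar.
have kr : 1 < a + r - b < r by apply/andP; split; lia.
have := pair_no_overlap inP inQ kr; rewrite (_ : r - (a + r - b) = b - a); last by lia.
rewrite (occ_overlap (pair_size inP) (pair_size inQ) oP oQ) ?eqxx //.
by apply/andP; split; lia.
Qed.

Definition occ_pair (w : seq nat) (a : nat) : bool :=
  occurs_at p w a || occurs_at p' w a.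

Lemma occ_pairP w a : reflect (exists2 P, in_pair P & occurs_at P w a) (occ_pair w a).
Proof.
apply: (iffP orP) => [[o|o] | [P /in_pairP [] -> o]]; try by [left | right].
  by exists p; rewrite /in_pair ?eqxx.
by exists p'; rewrite /in_pair ?eqxx ?orbT.
Qed.

Definition partner_at (w : seq nat) (a : nat) : seq nat :=
  if occurs_at p w a then p' else p.

Lemma partner_atE P w a : in_pair P -> occurs_at P w a -> partner_at w a = partner P.
Proof.
rewrite /partner_at /partner => inP oP; case: ifPn => [op | /negPf np].
  by rewrite (occ_same (pair_size inP) oP op) eqxx.
by case/in_pairP: inP oP => ->; rewrite ?np ?pair_distinct.
Qed.

Definition covering (w : seq nat) (q : nat) : seq nat :=
  [seq a <- iota 0 q | occ_pair w a & q < a + r.-1].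

Lemma mem_covering w q a : (a \in covering w q) = [&& occ_pair w a, a < q & q < a + r.-1].
Proof.
rewrite mem_filter mem_iota /= add0n.
by case: (occ_pair w a); case: (a < q); case: (q < a + r.-1).
Qed.

Lemma covering_occ P w a k b : in_pair P -> occurs_at P w a -> k < r ->
  b \in covering w (a + k) -> b = a.
Proof.
move=> inP oP kr; rewrite mem_covering => /and3P [/occ_pairP [Q inQ oQ] ba bk].
case: (ltngtP b a) => // [ba' | ab].
  by have := occ_apart inQ inP oQ oP ba'; lia.
by have := occ_apart inP inQ oP oQ ab; lia.
Qed.

(* The swap of [w]: every occurrence of [p] becomes one of [p'] and vice versa,
   written on the same set of values; other entries are unchanged. *)
Definition swap_word (w : seq nat) : seq nat :=
  mkseq (fun q => if covering w q is a :: _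
                  then nth 0 (dvals (window w a r)) (nth 0 (partner_at w a) (q - a))
                  else nth 0 w q) (size w).

Lemma size_swap_word w : size (swap_word w) = size w.
Proof. exact: size_mkseq. Qed.

Lemma nth_swap_word_out w q : q < size w ->
  (forall a, occ_pair w a -> a < q < a + r.-1 -> False) ->
  nth 0 (swap_word w) q = nth 0 w q.
Proof.
move=> qw out; rewrite nth_mkseq //; case e : (covering w q) => [//|b c].
have : b \in covering w q by rewrite e mem_head.
by rewrite mem_covering => /and3P [ob bq qb]; case: (out b ob); rewrite bq.
Qed.

Lemma nth_swap_word_in P w a k : in_pair P -> occurs_at P w a -> k < r ->
  nth 0 (swap_word w) (a + k) = nth 0 (dvals (window w a r)) (nth 0 (partner P) k).
Proof.
move=> inP oP kr; have za := occ_size oP; rewrite (pair_size inP) in za.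
rewrite nth_mkseq; last lia.
case e : (covering w (a + k)) => [|b c].
  have ends : (k == 0) || (k == r.-1).
    apply: contraT => /norP [k0 kr1].
    have : a \in covering w (a + k).
      by rewrite mem_covering; apply/and3P; split; [apply/occ_pairP; exists P | lia | lia].
    by rewrite e.
  rewrite (changeable_ends (pair_changeable inP)) ?(pair_size inP) //.
  by rewrite (occ_nth oP) ?(pair_size inP).
have -> : b = a by apply: (covering_occ inP oP kr); rewrite e mem_head.
by rewrite (partner_atE inP oP) addKn.
Qed.

Lemma window_swap_word P w a : in_pair P -> occurs_at P w a ->
  window (swap_word w) a r = map (nth 0 (dvals (window w a r))) (partner P).
Proof.
move=> inP oP; have za := occ_size oP; rewrite (pair_size inP) in za.
have sQ := pair_size (partner_in inP).
apply: (@eq_from_nth _ 0) => [|k]; first by rewrite size_map size_window ?size_swap_word.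
rewrite size_window ?size_swap_word // => kr.
by rewrite nth_window // (nth_swap_word_in inP oP kr) (nth_map 0) // sQ.
Qed.

Lemma partner_window_values P w a : in_pair P -> occurs_at P w a ->
  partner P =i iota 0 (size (dvals (window w a r))).
Proof.
by move=> inP oP x; rewrite partner_values // -(pair_size inP) -(occ_values oP).
Qed.

Lemma swap_word_occ_partner P w a : in_pair P -> occurs_at P w a ->
  occurs_at (partner P) (swap_word w) a.
Proof.
move=> inP oP; rewrite /occurs_at (pair_size (partner_in inP)); apply/andP; split.
  by rewrite size_swap_word -(pair_size inP) (occ_size oP).
rewrite -/(window _ a r) (window_swap_word inP oP) reduce_map_nth //.
  exact: dvals_sorted.
exact: partner_window_values.
Qed.

(* Away from the occurrences of [w], the swap changes nothing; hence any
   occurrence in [swap_word w] already starts an occurrence in [w]. *)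
Lemma swap_word_occ_pair P w a : in_pair P -> occurs_at P (swap_word w) a -> occ_pair w a.
Proof.
move=> inP oP; apply: contraT => no_occ; have za := occ_size oP.
rewrite (pair_size inP) size_swap_word in za.
suff same : window (swap_word w) a r = window w a r.
  case/negP: no_occ; apply/occ_pairP; exists P => //.
  apply/andP; split; first by rewrite (pair_size inP).
  by rewrite (pair_size inP) -/(window w a r) -same -(pair_size inP) (occ_reduce oP).
apply: (@eq_from_nth _ 0) => [|k]; first by rewrite !size_window ?size_swap_word.
rewrite size_window ?size_swap_word // => kr.
rewrite !nth_window // nth_swap_word_out //; first lia.
move=> b /occ_pairP [Pb inPb ob] /andP [ba bk].
have oQ := swap_word_occ_partner inPb ob; have inQ := partner_in inPb.
case: (ltngtP b a) => [lt | gt | eq].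
- by have := occ_apart inQ inP oQ oP lt; lia.
- by have := occ_apart inP inQ oP oQ gt; lia.
- by case/negP: no_occ; apply/occ_pairP; exists Pb; rewrite -?eq.
Qed.

Lemma swap_word_occ P w a : in_pair P ->
  occurs_at P (swap_word w) a = occurs_at (partner P) w a.
Proof.
move=> inP; apply/idP/idP => [oP | oQ]; last first.
  by rewrite -[X in occurs_at X](partnerK inP); apply: swap_word_occ_partner; rewrite ?partner_in.
have /occ_pairP [P0 inP0 oP0] := swap_word_occ_pair inP oP.
have oQ0 := swap_word_occ_partner inP0 oP0.
have -> : P = partner P0 by apply: (occ_same _ oP oQ0); rewrite !pair_size ?partner_in.
by rewrite partnerK.
Qed.

(* Occurrences of the pair sit at the same positions before and after the
   swap, so the swap of the swap is computed from the same windows. *)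
Lemma occ_pair_swap_word w a : occ_pair (swap_word w) a = occ_pair w a.
Proof.
have inp : in_pair p by rewrite /in_pair eqxx.
have inp' : in_pair p' by rewrite /in_pair eqxx orbT.
by rewrite /occ_pair !swap_word_occ // /partner eqxx pair_distinct orbC.
Qed.

Lemma covering_swap_word w q : covering (swap_word w) q = covering w q.
Proof. by apply: eq_filter => a; rewrite occ_pair_swap_word. Qed.

(* The swap maps inversion sequences to inversion sequences: this is where
   changeability is used. *)
Lemma swap_word_inversion w : inversion_word w -> inversion_word (swap_word w).
Proof.
move=> iw q; rewrite size_swap_word => qw; rewrite nth_mkseq //.
case e : (covering w q) => [|b c]; first exact: iw.
have : b \in covering w q by rewrite e mem_head.
rewrite mem_covering => /and3P [/occ_pairP [P inP oP] bq qb].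
rewrite (partner_atE inP oP) -(pair_size inP) (_ : q = b + (q - b)) ?addKn; last lia.
have kP : q - b < size P by rewrite (pair_size inP); lia.
by have := changeable_bound (pair_changeable inP) oP iw kP.
Qed.

(* The swap is an involution: the same occurrences cover each position, now
   of the partner patterns and on the same values, so swapping again
   restores [w]. *)
Lemma swap_wordK w : swap_word (swap_word w) = w.
Proof.
apply: (@eq_from_nth _ 0) => [|q]; rewrite !size_swap_word // => qw.
rewrite nth_mkseq ?size_swap_word // covering_swap_word.
case e : (covering w q) => [|b c]; first by rewrite nth_mkseq // e.
have : b \in covering w q by rewrite e mem_head.
rewrite mem_covering => /and3P [/occ_pairP [P inP oP] bq qb].
have oQ := swap_word_occ_partner inP oP.
rewrite (partner_atE (partner_in inP) oQ) (partnerK inP) (window_swap_word inP oP).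
rewrite dvals_map_nth; last exact: partner_window_values inP oP; last exact: dvals_sorted.
rewrite -(pair_size inP) -(occ_nth oP) ?subnKC ?(ltnW bq) //.
by rewrite (pair_size inP); lia.
Qed.

End SwapPair.

Section Tuples.
Variable n : nat.

Lemma nth_map_val (e : n.-tuple 'I_n) (i : 'I_n) : nth 0 (map val e) i = tnth e i.
Proof. by rewrite (nth_map (tnth e i)) ?size_tuple // -tnth_nth. Qed.

Lemma invseqP (e : n.-tuple 'I_n) : e \in invseq n <-> inversion_word (map val e).
Proof.
rewrite inE; split => [/forallP iv q | iw].
  by rewrite size_map size_tuple => qn; rewrite (nth_map_val e (Ordinal qn)); apply: iv.
by apply/forallP => i; rewrite -nth_map_val; apply: iw; rewrite size_map size_tuple.
Qed.

Definition swap_tuple (p p' : seq nat) (e : n.-tuple 'I_n) : n.-tuple 'I_n :=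
  [tuple insubd (tnth e i) (nth 0 (swap_word p p' (map val e)) i) | i < n].

Variables p p' : seq nat.
Hypothesis sw : swappable p p'.

Lemma map_val_swap_tuple e : e \in invseq n ->
  map val (swap_tuple p p' e) = swap_word p p' (map val e).
Proof.
move=> /invseqP /(swap_word_inversion sw) iw.
apply: (@eq_from_nth _ 0) => [|q]; first by rewrite size_swap_word !(size_map val) !size_tuple.
rewrite size_map size_tuple => qn.
have := iw q; rewrite size_swap_word size_map size_tuple => /(_ qn) le_q.
rewrite (nth_map_val _ (Ordinal qn)) tnth_mktuple insubdK //.
exact: leq_ltn_trans le_q qn.
Qed.

Lemma swap_tuple_invseq e : e \in invseq n -> swap_tuple p p' e \in invseq n.
Proof.
move=> ie; apply/invseqP; rewrite map_val_swap_tuple //.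
by apply: (swap_word_inversion sw); apply/invseqP.
Qed.

Lemma swap_tupleK e : e \in invseq n -> swap_tuple p p' (swap_tuple p p' e) = e.
Proof.
move=> ie; apply: val_inj; apply: (inj_map val_inj) => /=.
by rewrite !map_val_swap_tuple ?swap_tuple_invseq // swap_wordK.
Qed.

Lemma Em_swap_tuple P e : in_pair p p' P -> e \in invseq n ->
  Em P (swap_tuple p p' e) = Em (partner p p' P) e.
Proof.
by move=> inP ie; apply/setP => i; rewrite !inE map_val_swap_tuple // swap_word_occ.
Qed.

End Tuples.

Lemma card_involution (T : finType) (D : {set T}) (f : T -> T) (X Y : pred T) :
  {in D, forall x, f x \in D} -> {in D, involutive f} ->
  {in D, forall x, Y (f x) = X x} ->
  #|[set x in D | X x]| = #|[set x in D | Y x]|.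
Proof.
move=> fD fK fXY.
have -> : [set x in D | Y x] = f @: [set x in D | X x].
  apply/setP => y; rewrite inE; apply/andP/imsetP => [[yD Yy] | [x /setIdP [xD Xx] ->]].
    by exists (f y); rewrite ?fK // inE fD // -fXY ?fD ?fK.
  by rewrite fD // fXY.
rewrite card_in_imset // => x y /setIdP [xD _] /setIdP [yD _] fxy.
by rewrite -(fK x xD) fxy fK.
Qed.

Lemma Em_exchange_involution (p p' : seq nat) n :
  is_pattern p -> is_pattern p' -> non_overlapping p -> non_overlapping p' ->
  mutually_non_overlapping p p' -> interchangeable p p' ->
  exists f : n.-tuple 'I_n -> n.-tuple 'I_n,
    [/\ {in invseq n, forall e, f e \in invseq n}, {in invseq n, involutive f},
        {in invseq n, forall e, Em p (f e) = Em p' e} &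
        {in invseq n, forall e, Em p' (f e) = Em p e}].
Proof.
move=> pat pat' nov nov' mnov /andP [ch ch'].
have [<-|neq] := eqVneq p p'; first by exists id; split.
have sw : swappable p p' by [].
have [inp inp'] : in_pair p p' p /\ in_pair p p' p'.
  by rewrite /in_pair !eqxx orbT.
exists (swap_tuple p p'); split=> e ie.
- exact: swap_tuple_invseq.
- exact: swap_tupleK.
- by rewrite Em_swap_tuple // /partner eqxx.
- by rewrite Em_swap_tuple // /partner pair_distinct.
Qed.

Theorem mainTheorem2 (p p' : seq nat) :
  is_pattern p -> is_pattern p' -> size p = size p' ->
  non_overlapping p -> non_overlapping p' ->
  mutually_non_overlapping p p' ->
  interchangeable p p' ->
  (forall (n : nat) (S T : {set 'I_n}),
     #|[set e in invseq n | (Em p e == S) && (Em p' e == T)]| =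
     #|[set e in invseq n | (Em p e == T) && (Em p' e == S)]|)
  /\ super_strongly_Wilf_equiv p p'.
Proof.
move=> pat pat' _ nov nov' mnov ich.
have exchange n := Em_exchange_involution n pat pat' nov nov' mnov ich.
split=> [n S T | n T]; have [f [fD fK fp fp']] := exchange n.
  apply: (card_involution (X := fun e => (Em p e == S) && (Em p' e == T)) fD fK).
  by move=> e ie /=; rewrite fp ?fp' // andbC.
apply: (card_involution (X := fun e => Em p e == T) fD fK).
by move=> e ie /=; rewrite fp'.
Qed.
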